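(* Let $(\mathcal{A},\varphi)$ be a tracial noncommutative probability space with universal enveloping traffic space $(\mathcal{B},\psi)$, and let $t\in\Theta(\mathcal{B})$ be (the class of) a graph monomial such that either $v_{\mathrm{in}}=v_{\mathrm{out}}$ or some simple cycle of its underlying undirected multigraph passes through both $v_{\mathrm{in}}$ and $v_{\mathrm{out}}$. Then $t\equiv\Delta(t)\pmod\psi$.
   Context: $(\mathcal{A},\varphi)$: unital complex algebra with unital tracial linear functional; free cumulants $\kappa_n$ determined by $\varphi(a_1\cdots a_n)=\sum_{\pi\in NC(n)}\prod_{B\in\pi}\kappa_{|B|}[(a_i)_{i\in B}]$. A graph monomial in $\mathcal{A}$ is a finite connected directed multigraph (loops, parallel edges allowed) with distinguished, not necessarily distinct, vertices $v_{\mathrm{in}},v_{\mathrm{out}}$ and edge labels in $\mathcal{A}$, up to isomorphism. $\iota(a)$: two vertices, one edge from $v_{\mathrm{in}}$ to $v_{\mathrm{out}}$ labelled $a$. Substitution $Z_g(t_1,\dots,t_K)$ for a connected bi-rooted multidigraph $g$ with ordered edges $e_1,\dots,e_K$ replaces each $e_i$ by a copy of $t_i$, identifying $\mathrm{src}(e_i)$ with the input and $\mathrm{tgt}(e_i)$ with the output of $t_i$; the product $t_1t_2$ identifies the input of $t_1$ with the output of $t_2$ (output of $t_1$, input of $t_2$ become output, input). $\mathcal{B}=\mathcal{G}(\mathcal{A})$ is the span of graph monomials modulo the span of $Z_g(\iota(a_1),\dots,\iota(a_K))-Z_g(P(\iota(b_1),\dots,\iota(b_n)),\iota(a_2),\dots)$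 (any edge position) for $a_1=P(b_1,\dots,b_n)$, $P$ a noncommutative polynomial. $\Delta(t)$ is the graph monomial obtained from $t$ by identifying $v_{\mathrm{in}}$ and $v_{\mathrm{out}}$ (the merged vertex being both input and output). $\Theta(\mathcal{B})$ is the span of classes of graph monomials with $v_{\mathrm{in}}=v_{\mathrm{out}}$ or with a simple cycle through both $v_{\mathrm{in}}$ and $v_{\mathrm{out}}$. A test graph is a finite connected directed multigraph with labels in $\mathcal{A}$; $T^\pi$ identifies vertices in blocks of a partition $\pi$. Cactus: connected multigraph with each edge in exactly one simple cycle (loops, pairs of parallel edges count); pads = these cycles; oriented cactus: every pad directed. $\tau^0_\varphi[T]=\prod_{C\in\mathrm{Pads}(T)}\kappa_{n_C}[\gamma(e_1),\dots,\gamma(e_{n_C})]$ for oriented cacti (edges listed with $\mathrm{src}(e_i)=\mathrm{tgt}(e_{i+1})$, indices mod $n_C$), else $0$; $\tau_\varphi[T]=\sum_\pi\tau^0_\varphi[T^\pi]$ over partitions of the vertex set. $\psi(t)=\tau_\varphi[\tilde\Delta(t)]$ where $\tilde\Delta(t)$ identifies input and output and forgets roots. $s\equiv t\pmod\psi$ means $\psi((s-t)u)=0$ for all $u\in\mathcal{B}$. *)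

From HB Require Import structures.
From mathcomp Require Import all_boot all_order all_algebra.
From Stdlib Require Import ClassicalEpsilon.
Unset Printing Implicit Defensive.
Import GRing.Theory Num.Theory.

Definition pb (P : Prop) : bool :=
  if excluded_middle_informative P then true else false.

Definition noncrossing (n : nat) (P : {set {set 'I_n}}) : bool :=
  [forall B1 in P, forall B2 in P, (B1 != B2) ==>
     ~~ [exists a : 'I_n, exists b : 'I_n, exists c : 'I_n, exists d : 'I_n,
          [&& (a < b)%N, (b < c)%N, (c < d)%N, a \in B1, c \in B1,
              b \in B2 & d \in B2]]].

(* ---------- test graphs (labels in A) ----------
   vertex set = the finite set tVs inside the finite type tV,
   edges = elements of the finite type tE (multigraph, loops allowed). *)
Record tgraph (A : Type) := TGraph {
  tV : finType; tVs : {set tV}; tE : finType;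
  tsrc : tE -> tV; ttgt : tE -> tV; tlab : tE -> A }.
Arguments TGraph {A} tV tVs tE tsrc ttgt tlab.
Arguments tVs {A} t.
Arguments tV {A}.
Arguments tE {A}.
Arguments tsrc {A t}.
Arguments ttgt {A t}.
Arguments tlab {A t}.

Section TestGraphs.
Variable A : Type.
Implicit Types T : tgraph A.

Definition tgraph_wf T : Prop :=
  forall e, tsrc e \in tVs T /\ ttgt e \in tVs T.

Definition tadj T : rel (tV T) := fun v w =>
  [exists e : tE T, ((tsrc e == v) && (ttgt e == w))
                    || ((tsrc e == w) && (ttgt e == v))].

Definition tconnected T : Prop :=
  forall v w, v \in tVs T -> w \in tVs T -> connect (tadj T) v w.

(* s = [e_0;..;e_{k-1}] distinct edges, w = [w_0;..;w_{k-1}] distinct vertices,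
   e_i joins w_i and w_{i+1 mod k} (undirected): a simple cycle of the
   underlying undirected multigraph (k = 1: loop, k = 2: parallel pair). *)
Definition cycle_seq {T} (s : seq (tE T)) (w : seq (tV T)) : Prop :=
  [/\ (0 < size s)%N, size w = size s, uniq s, uniq w &
      all (fun p : tE T * (tV T * tV T) =>
             ((tsrc p.1 == p.2.1) && (ttgt p.1 == p.2.2))
             || ((tsrc p.1 == p.2.2) && (ttgt p.1 == p.2.1)))
          (zip s (zip w (rot 1 w)))].

Definition simple_cycle {T} (S : {set tE T}) : Prop :=
  exists s w, cycle_seq s w /\ S = [set e in s].

Definition cycle_through {T} (x y : tV T) : Prop :=
  exists s w, cycle_seq s w /\ x \in w /\ y \in w.

Definition cactus T : Prop :=
  tconnected T /\ forall e : tE T, exists! S, simple_cycle S /\ e \in S.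

Definition pads T : {set {set tE T}} := [set S | pb (simple_cycle S)].

Definition dir_order {T} (s : seq (tE T)) : bool :=
  all (fun p : tE T * tE T => tsrc p.1 == ttgt p.2) (zip s (rot 1 s)).

Definition pad_order {T} (S : {set tE T}) : option (seq (tE T)) :=
  ohead [seq s <- permutations (enum S) | dir_order s].

Definition oriented_cactus T : Prop :=
  cactus T /\ forall S, S \in pads T -> pad_order S != None.

Definition tquot {T} (P : {set {set tV T}}) : tgraph A :=
  TGraph {set tV T} P (tE T) (fun e => pblock P (tsrc e))
         (fun e => pblock P (ttgt e)) (@tlab A T).

Definition gmap {T} {W : finType} (f : tV T -> W) : tgraph A :=
  TGraph W (f @: tVs T) (tE T) (f \o @tsrc A T) (f \o @ttgt A T) (@tlab A T).

Definition ident {T} (x y : tV T) (v : tV T) : {set tV T} :=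
  if v \in [set x; y] then [set x; y] else [set v].

Definition tdisj (T1 T2 : tgraph A) : tgraph A :=
  TGraph (tV T1 + tV T2)%type (inl @: tVs T1 :|: inr @: tVs T2)
         (tE T1 + tE T2)%type
         (fun e => match e with inl e1 => inl (tsrc e1) | inr e2 => inr (tsrc e2) end)
         (fun e => match e with inl e1 => inl (ttgt e1) | inr e2 => inr (ttgt e2) end)
         (fun e => match e with inl e1 => tlab e1 | inr e2 => tlab e2 end).

Record gmono := GMono { gT : tgraph A; gin : tV gT; gout : tV gT }.

Definition gm_wf (t : gmono) : Prop :=
  [/\ tgraph_wf (gT t), gin t \in tVs (gT t), gout t \in tVs (gT t)
    & tconnected (gT t)].

Definition Delta (t : gmono) : gmono :=
  let f := ident (gin t) (gout t) in
  @GMono (gmap f) (f (gin t)) (f (gin t)).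

(* product t1 t2: identify input of t1 with output of t2;
   output of t1 is the output, input of t2 is the input *)
Definition gmul (t1 t2 : gmono) : gmono :=
  let G := tdisj (gT t1) (gT t2) in
  let f := @ident G (inl (gin t1)) (inr (gout t2)) in
  @GMono (gmap f) (f (inr (gin t2))) (f (inl (gout t1))).

End TestGraphs.
Arguments gT {A}. Arguments gin {A}. Arguments gout {A}. Arguments GMono {A}.
Arguments tgraph_wf {A}. Arguments tadj {A}. Arguments tconnected {A}.
Arguments cycle_seq {A T}. Arguments simple_cycle {A T}.
Arguments cycle_through {A T}. Arguments cactus {A}. Arguments pads {A}.
Arguments dir_order {A T}. Arguments pad_order {A T}.
Arguments oriented_cactus {A}. Arguments tquot {A T}. Arguments gmap {A T W}.
Arguments ident {A T}. Arguments tdisj {A}. Arguments gm_wf {A}.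
Arguments Delta {A}. Arguments gmul {A}.

Section Traffic.
Variables (C : numClosedFieldType) (A : algType C).
Variable kappa : seq A -> C.
Local Open Scope ring_scope.

Definition tau0 (T : tgraph A) : C :=
  if pb (oriented_cactus T) then
    \prod_(S in pads T)
       match pad_order S with
       | Some s => kappa [seq tlab e | e <- s]
       | None => 0
       end
  else 0.

Definition tau (T : tgraph A) : C :=
  \sum_(P : {set {set tV T}} | partition P (tVs T)) tau0 (tquot P).

Definition psi (t : gmono A) : C := tau (gT (Delta t)).

(* elements of B represented by formal linear combinations of graph monomials *)
Definition psiB (u : seq (C * gmono A)) : C := \sum_(x <- u) x.1 * psi x.2.

Definition mulB (u v : seq (C * gmono A)) : seq (C * gmono A) :=
  [seq (x.1 * y.1, gmul x.2 y.2) | x <- u, y <- v].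

End Traffic.
Arguments noncrossing {n}.
Arguments tau0 {C A}. Arguments tau {C A}. Arguments psi {C A}.
Arguments psiB {C A}. Arguments mulB {C A}.

(* Both psi(t s) and psi(Delta(t) s) are tau of a quotient of the disjoint union G of
   t and s, hence sums of tau0(G^Q) over the partitions Q of the vertices of G merging
   in_t with out_s and in_s with out_t; for Delta(t) s, Q must moreover merge in_t with
   out_t.  The partitions separating in_t from out_t contribute nothing: in G^Q the
   blocks of in_t and out_t are joined by three edge-disjoint walks, two along the
   simple cycle of t through in_t and out_t and one across the connected graph s.
   Closing a simple path inside the first walk by either of the other two yields two
   distinct simple cycles through its first edge, so G^Q is not a cactus. *)
From HB Require Import structures.
From mathcomp Require Import all_boot all_order all_algebra.
From Stdlib Require Import ClassicalEpsilon.
Set Implicit Arguments. Unset Strict Implicit.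
Import GRing.Theory.
Local Open Scope ring_scope.

Lemma pbP (P : Prop) : reflect P (pb P).
Proof. by rewrite /pb; case: excluded_middle_informative => H; constructor. Qed.

Lemma pb_iff (P Q : Prop) : (P <-> Q) -> pb P = pb Q.
Proof. by case=> PQ QP; apply/pbP/pbP. Qed.

Section Walks.
Variables (E V : eqType) (L : E -> V -> V -> bool).

Fixpoint walk (x : V) (p : seq (E * V)) (y : V) : Prop :=
  match p with
  | [::] => x = y
  | q :: p' => L q.1 x q.2 /\ walk q.2 p' y
  end.

Definition edge_disjoint (p1 p2 : seq (E * V)) : Prop :=
  forall f, f \in map fst p1 -> f \in map fst p2 -> False.

Lemma walk_cat x p1 z p2 y : walk x p1 z -> walk z p2 y -> walk x (p1 ++ p2) y.
Proof.
elim: p1 x => [|q p1 IH] x /=; first by move=> ->.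
by case=> Lq W1 W2; split => //; apply: IH W1 W2.
Qed.

Lemma walk_last x p y : walk x p y -> last x (map snd p) = y.
Proof. by elim: p x => [|q p IH] x //= [_ /IH]. Qed.

Lemma walk_split x p y v : v \in x :: map snd p -> walk x p y ->
  exists p1 p2, [/\ p = p1 ++ p2, walk x p1 v & walk v p2 y].
Proof.
elim: p x => [|q p IH] x /=.
  by rewrite inE => /eqP -> ->; exists [::], [::].
rewrite inE => /orP [/eqP ->|Hv] [Lq W]; first by exists [::], (q :: p).
have [p1 [p2 [-> W1 W2]]] := IH _ Hv W.
by exists (q :: p1), p2.
Qed.

Lemma walk_simplify x p y : walk x p y ->
  exists q, [/\ walk x q y, uniq (x :: map snd q) & {subset map fst q <= map fst p}].
Proof.
elim: p x => [|[e z] p IH] x; first by move=> /= ->; exists [::].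
move=> [Lxz /IH [q [Wq Uq Sq]]].
have [Hx|Hx] := boolP (x \in z :: map snd q).
  have [q1 [q2 [Eq W1 W2]]] := walk_split Hx Wq.
  have Hx1 : x \in z :: map snd q1 by rewrite -(walk_last W1) mem_last.
  move: Uq; rewrite Eq map_cat -cat_cons cat_uniq => /and3P [_ /hasPn Hq2 Uq2].
  exists q2; split => //.
    by rewrite cons_uniq Uq2 andbT; apply/negP => /Hq2; rewrite Hx1.
  by move=> f Hf; rewrite inE Sq ?orbT // Eq map_cat mem_cat Hf orbT.
exists ((e, z) :: q); split => //; first by rewrite cons_uniq Hx Uq.
by move=> f; rewrite /= !inE => /orP [->|/Sq ->]; rewrite ?orbT.
Qed.

End Walks.

Lemma walk_map (E V E' V' : eqType) (L : E -> V -> V -> bool)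
    (L' : E' -> V' -> V' -> bool) (fe : E -> E') (fv : V -> V') x p y :
  (forall e a b, L e a b -> L' (fe e) (fv a) (fv b)) ->
  walk L x p y -> walk L' (fv x) (map (fun q => (fe q.1, fv q.2)) p) (fv y).
Proof.
move=> HL; elim: p x => [|q p IH] x /=; first by move=> ->.
by case=> Lq W; split; [apply: HL | apply: IH].
Qed.

Lemma rot1_belast (V : eqType) (x : V) s : s != [::] -> last x s = x ->
  rot 1 (belast x s) = s.
Proof. by case: s => [//|y s] _ /= Hl; rewrite rot1_cons [RHS]lastI Hl. Qed.

Section TestGraphWalks.
Variables (A : Type) (T : tgraph A).

Definition joins (e : tE T) (a b : tV T) : bool :=
  ((tsrc e == a) && (ttgt e == b)) || ((tsrc e == b) && (ttgt e == a)).

Lemma connect_walk u v : connect (tadj T) u v -> exists p, walk joins u p v.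
Proof.
move/connectP => [vs Hp ->]; elim: vs u Hp => [|y vs IH] u /=; first by exists [::].
by case/andP => /existsP [e He] /IH [p W]; exists ((e, y) :: p).
Qed.

Lemma walk_edge_ends x p y f : walk joins x p y -> f \in map fst p ->
  tsrc f \in x :: map snd p /\ ttgt f \in x :: map snd p.
Proof.
elim: p x => [|[e z] p IH] x //= [Je W]; rewrite inE => /orP [/eqP ->|Hf].
  by case/orP: Je => /andP [/eqP -> /eqP ->]; rewrite !inE !eqxx ?orbT.
by have [] := IH _ W Hf; rewrite !inE => -> ->; rewrite !orbT.
Qed.

Lemma walk_uniq_edges x p y : walk joins x p y -> uniq (x :: map snd p) ->
  uniq (map fst p).
Proof.
elim: p x => [|[e z] p IH] x //= [Je W] /andP [Hx Up].
rewrite (IH _ W Up) andbT; apply: contra Hx => /(walk_edge_ends W) [Hs Ht].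
by case/orP: Je => /andP [/eqP Es /eqP Et]; [rewrite -Es | rewrite -Et].
Qed.

Lemma walk_stays (U : pred (tV T)) a p b : walk joins a p b -> a \in U ->
  (forall f, f \in map fst p -> tsrc f \in U /\ ttgt f \in U) -> b \in U.
Proof.
elim: p a => [|[e z] p IH] a /=; first by move=> ->.
move=> [Je W] Ha HU; apply: (IH _ W) => [|f Hf]; last by apply: HU; rewrite inE Hf orbT.
have [Hs Ht] := HU e (mem_head _ _).
by case/orP: Je => /andP [/eqP E1 /eqP E2]; [rewrite -E2 | rewrite -E1].
Qed.

Lemma walk_cycle_seq x p : walk joins x p x -> p != [::] -> uniq (map snd p) ->
  uniq (map fst p) -> cycle_seq (map fst p) (belast x (map snd p)).
Proof.
move=> W Hp Us Uf.
have Hr : rot 1 (belast x (map snd p)) = map snd p.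
  by apply: rot1_belast; [case: (p) Hp | apply: walk_last W].
have joins_steps : forall y q, walk joins y q x ->
    all (fun r => joins r.1 r.2.1 r.2.2)
      (zip (map fst q) (zip (belast y (map snd q)) (map snd q))).
  by move=> y q; elim: q y => [|r q IH] y //= [-> /IH].
split => //; first by case: (p) Hp.
- by rewrite size_belast !size_map.
- by rewrite -(rot_uniq 1) Hr.
- by rewrite Hr; apply: joins_steps W.
Qed.

Lemma zip_walk ws s x y : size s = (size ws).+1 ->
  all (fun r => joins r.1 r.2.1 r.2.2) (zip s (zip (x :: ws) (rcons ws y))) ->
  walk joins x (zip s (rcons ws y)) y.
Proof.
elim: ws s x => [|z ws IH] [|e s] x //=; first by case: s => //= _ /andP [].
by move=> [Hs] /andP [Je Hall]; split => //; apply: IH.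
Qed.

Lemma zip_joins_in (s : seq (tE T)) w w2 : tgraph_wf T ->
  size s = size w -> size w2 = size w ->
  all (fun r => joins r.1 r.2.1 r.2.2) (zip s (zip w w2)) -> all (mem (tVs T)) w.
Proof.
move=> wf; elim: w s w2 => [|a w IH] [|e s] [|b w2] //= [Es] [Ew] /andP [Je Hall].
rewrite (IH s w2 Es Ew Hall) andbT; have [Hs Ht] := wf e.
by case/orP: Je => /andP [/eqP E1 /eqP E2]; [rewrite -E1 | rewrite -E2].
Qed.

Lemma cycle_seq_walks s w u v : cycle_seq s w -> u \in w -> v \in w ->
  exists r1 r2, [/\ walk joins u r1 v, walk joins v r2 u & edge_disjoint r1 r2].
Proof.
case=> _ Hsz Us _ Hall; case: w Hsz Hall => [|x ws] //= Hsz Hall Hu Hv.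
rewrite rot1_cons in Hall.
have W := zip_walk (esym Hsz) Hall.
set p := zip s (rcons ws x) in W.
have Hfst : map fst p = s by rewrite -/(unzip1 _) unzip1_zip // size_rcons Hsz.
have Hsnd : map snd p = rcons ws x by rewrite -/(unzip2 _) unzip2_zip // size_rcons Hsz.
have Hu' : u \in x :: map snd p by rewrite Hsnd in_cons mem_rcons Hu orbT.
have [p1 [p2 [Ep W1 W2]]] := walk_split Hu' W.
have Hv' : v \in u :: map snd (p2 ++ p1).
  have : v \in map snd p by rewrite Hsnd mem_rcons.
  by rewrite Ep !map_cat in_cons !mem_cat => /orP [] ->; rewrite !orbT.
have W21 := walk_cat W2 W1.
have [r1 [r2 [Er W3 W4]]] := walk_split Hv' W21.
exists r1, r2; split => // f H1 H2.
have : uniq (map fst (r1 ++ r2)) by rewrite -Er map_cat uniq_catC -map_cat -Ep Hfst.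
by rewrite map_cat cat_uniq => /and3P [_ /hasPn /(_ f H2)]; rewrite H1.
Qed.

Lemma closing_simple_cycle X Z Y e P p :
  joins e X Z -> walk joins Z P Y -> uniq (X :: Z :: map snd P) ->
  uniq (e :: map fst P) -> walk joins Y p X -> e \notin map fst p ->
  exists R : seq (tE T * tV T), [/\ simple_cycle [set f in e :: map fst R],
     {subset map fst R <= map fst P ++ map fst p}
   & exists2 g, g \in map fst R & g \in map fst p].
Proof.
move=> Je WP UP Ue Wp Hep.
have [R [WR UR SubR]] := walk_simplify (walk_cat WP Wp).
rewrite map_cat in SubR.
exists R; split => //; last first.
  have [/hasP [g Hg1 Hg2]|/hasPn Hnone] := boolP (has [in map fst p] (map fst R)).
    by exists g.
  (* otherwise R only visits vertices of P, and X is not one of them *)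
  have : X \in Z :: map snd P.
    apply: (walk_stays WR (mem_head _ _)) => f Hf; apply: (walk_edge_ends WP).
    by move: (SubR f Hf); rewrite mem_cat (negbTE (Hnone f Hf)) orbF.
  by case/andP: UP => /negP.
exists (map fst ((e, Z) :: R)), (belast X (map snd ((e, Z) :: R))); split => //.
apply: walk_cycle_seq => //.
rewrite /= (walk_uniq_edges WR UR) andbT; apply/negP => /SubR.
by rewrite mem_cat (negbTE Hep) orbF; case/andP: Ue => /negP.
Qed.

Lemma three_disjoint_walks_not_cactus X Y p1 p2 p3 : X != Y ->
  walk joins X p1 Y -> walk joins Y p2 X -> walk joins Y p3 X ->
  edge_disjoint p1 p2 -> edge_disjoint p1 p3 -> edge_disjoint p2 p3 -> ~ cactus T.
Proof.
move=> XY W1 W2 W3 D12 D13 D23 [_ Hcactus].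
have [q [Wq UP SubP]] := walk_simplify W1.
have Ue := walk_uniq_edges Wq UP.
case: q Wq UP SubP Ue => [/= XeY|[e Z] P [Je WP]] UP SubP Ue.
  by rewrite XeY eqxx in XY.
have He1 : e \in map fst p1 by apply: SubP; rewrite mem_head.
have [R2 [C2 S2 [g Hg2 Hgp2]]] :=
  closing_simple_cycle Je WP UP Ue W2 (introT negP (D12 e He1)).
have [R3 [C3 S3 _]] := closing_simple_cycle Je WP UP Ue W3 (introT negP (D13 e He1)).
have [S [_ US]] := Hcactus e.
have E23 : [set f in e :: map fst R2] = [set f in e :: map fst R3].
  by rewrite -(US _ (conj C2 _)) ?(US _ (conj C3 _)) // inE mem_head.
have : g \in [set f in e :: map fst R3] by rewrite -E23 inE inE Hg2 orbT.
rewrite inE inE => /orP [/eqP Eg|/S3]; first by apply: (D12 e He1); rewrite -Eg.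
rewrite mem_cat => /orP [Hg|Hg]; last exact: D23 Hgp2 Hg.
by apply: (D12 g _ Hgp2); apply: SubP; rewrite inE Hg orbT.
Qed.

End TestGraphWalks.

Section Relabel.
Variables (A : Type) (V V' E : finType) (Vs : {set V}) (Vs' : {set V'})
  (src tgt : E -> V) (src' tgt' : E -> V') (lab : E -> A) (h : V -> V').
Hypotheses (h_inj : {in Vs &, injective h}) (h_Vs : Vs' = h @: Vs)
  (h_src : forall e, src' e = h (src e)) (h_tgt : forall e, tgt' e = h (tgt e))
  (wf : forall e, src e \in Vs /\ tgt e \in Vs).

Let T := TGraph V Vs E src tgt lab.
Let T' := TGraph V' Vs' E src' tgt' lab.

Let wf' : tgraph_wf T'.
Proof. by move=> e; have [Hs Ht] := wf e; rewrite /= h_src h_tgt h_Vs !imset_f. Qed.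

Let h_mem v : v \in Vs -> h v \in Vs'.
Proof. by move=> Hv; rewrite h_Vs imset_f. Qed.

Let h_eq a b : a \in Vs -> b \in Vs -> (h a == h b) = (a == b).
Proof. by move=> Ha Hb; apply/eqP/eqP => [|-> //]; apply: h_inj. Qed.

Lemma joins_relabel s w w2 : all (mem Vs) w -> all (mem Vs) w2 ->
  all (fun r => joins (T := T') r.1 r.2.1 r.2.2) (zip s (zip (map h w) (map h w2)))
  = all (fun r => joins (T := T) r.1 r.2.1 r.2.2) (zip s (zip w w2)).
Proof.
elim: s w w2 => [|e s IH] [|a w] [|b w2] //= /andP [Ha Hw] /andP [Hb Hw2].
have [Hse Hte] := wf e.
by rewrite IH // /joins /= h_src h_tgt !h_eq.
Qed.

Lemma cycle_seq_relabel s w : @cycle_seq A T s w -> @cycle_seq A T' s (map h w).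
Proof.
case=> [H0 Hsz Us Uw Hall].
have Hw : all (mem Vs) w := zip_joins_in (T := T) wf (esym Hsz) (size_rot 1 w) Hall.
split => //; first by rewrite size_map.
  by rewrite map_inj_in_uniq // => a b /(allP Hw) Ha /(allP Hw) Hb; apply: h_inj.
by rewrite -map_rot joins_relabel // (eq_all_r (mem_rot 1 w)).
Qed.

Lemma cycle_seq_unrelabel s w' : @cycle_seq A T' s w' ->
  exists2 w, @cycle_seq A T s w & w' = map h w.
Proof.
case=> [H0 Hsz Us Uw Hall].
have Hw' : all (mem Vs') w' := zip_joins_in wf' (esym Hsz) (size_rot 1 w') Hall.
have [w Hw Ew] : exists2 w, all (mem Vs) w & w' = map h w.
  elim: w' Hw' {H0 Hsz Us Uw Hall} => [|a w' IH] /=; first by exists [::].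
  case/andP; rewrite h_Vs => /imsetP [b Hb ->]; rewrite -h_Vs => /IH [w Hw ->].
  by exists (b :: w); rewrite //= Hb.
exists w => //; subst w'; split => //; first by rewrite -Hsz size_map.
  by move: Uw; rewrite map_inj_in_uniq // => a b /(allP Hw) Ha /(allP Hw) Hb; apply: h_inj.
by rewrite -joins_relabel ?(eq_all_r (mem_rot 1 w)) // map_rot.
Qed.

Lemma simple_cycle_relabel S : @simple_cycle A T S <-> @simple_cycle A T' S.
Proof.
split => [[s [w [Hc ->]]]|[s [w' [Hc ->]]]].
  by exists s, (map h w); split => //; apply: cycle_seq_relabel.
by have [w Hc' _] := cycle_seq_unrelabel Hc; exists s, w.
Qed.

Lemma tadj_relabel a b : tadj T a b -> tadj T' (h a) (h b).
Proof.
move=> /existsP [e Je]; apply/existsP; exists e; rewrite /= h_src h_tgt.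
by move: Je => /= /orP [] /andP [/eqP -> /eqP ->]; rewrite !eqxx ?orbT.
Qed.

Lemma path_unrelabel (p' : seq V') x : x \in Vs -> path (tadj T') (h x) p' ->
  exists p, [/\ path (tadj T) x p, map h p = p' & all (mem Vs) p].
Proof.
elim: p' x => [|y' p' IH] x Hx /=; first by exists [::].
case/andP => /existsP [e Je] Hp; have [Hse Hte] := wf e.
have [y [Hy Ey Hxy]] : exists y, [/\ y \in Vs, y' = h y & tadj T x y].
  move: Je; rewrite /= h_src h_tgt h_eq //.
  case/orP => /andP [/eqP E1 /eqP E2].
    by exists (tgt e); split => //; apply/existsP; exists e; rewrite /= E1 !eqxx.
  move: E2 => /eqP; rewrite h_eq // => /eqP E2.
  by exists (src e); split => //; apply/existsP; exists e; rewrite /= E2 !eqxx orbT.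
move: Hp; rewrite Ey => /(IH _ Hy) [p [Hp Ep Hall]].
by exists (y :: p); rewrite /= Hxy Hp Ep Hy Hall.
Qed.

Lemma tconnected_relabel : @tconnected A T <-> @tconnected A T'.
Proof.
split => conn v w.
  rewrite /= h_Vs => /imsetP [a Ha ->] /imsetP [b Hb ->].
  have /connectP [p Hp ->] := conn a b Ha Hb.
  by apply/connectP; exists (map h p); [apply: homo_path tadj_relabel Hp | rewrite last_map].
move=> /= Hv Hw.
have /connectP [p' Hp' Hl'] := conn (h v) (h w) (h_mem Hv) (h_mem Hw).
have [p [Hp Ep Hall]] := path_unrelabel Hv Hp'.
apply/connectP; exists p => //.
have Hl : last v p \in Vs.
  by move: (mem_last v p); rewrite inE => /orP [/eqP ->|/(allP Hall)].
by apply: h_inj => //; rewrite Hl' -Ep last_map.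
Qed.

Lemma cactus_relabel : @cactus A T <-> @cactus A T'.
Proof.
have eq_uniq_cycle e : (exists! S, @simple_cycle A T S /\ e \in S) <->
                        (exists! S, @simple_cycle A T' S /\ e \in S).
  split => [] [S [[Hc He] HU]]; exists S; (split; first by split => //; apply/simple_cycle_relabel);
    by move=> S' [Hc' He']; apply: HU; split => //; apply/simple_cycle_relabel.
rewrite /cactus tconnected_relabel.
by split => [] [H1 H2]; split => // e; apply/eq_uniq_cycle.
Qed.

Lemma pads_relabel : @pads A T = @pads A T'.
Proof. by apply/setP => S; rewrite !inE (pb_iff (simple_cycle_relabel S)). Qed.

Lemma pad_order_relabel S : @pad_order A T S = @pad_order A T' S.
Proof.
rewrite /pad_order; congr ohead; apply: eq_filter => s.
rewrite /dir_order; apply: eq_all => p /=.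
have [Hs1 _] := wf p.1; have [_ Ht2] := wf p.2.
by rewrite h_src h_tgt h_eq.
Qed.

Lemma oriented_cactus_relabel : @oriented_cactus A T <-> @oriented_cactus A T'.
Proof.
rewrite /oriented_cactus pads_relabel cactus_relabel.
split => [] [H1 H2]; split => // S HS;
  [rewrite -pad_order_relabel | rewrite pad_order_relabel]; exact: H2.
Qed.

End Relabel.

Lemma tau0_relabel (C : numClosedFieldType) (A : algType C) (kappa : seq A -> C)
  (V V' E : finType) (Vs : {set V}) (Vs' : {set V'})
  (src tgt : E -> V) (src' tgt' : E -> V') (lab : E -> A) (h : V -> V') :
  {in Vs &, injective h} -> Vs' = h @: Vs ->
  (forall e, src' e = h (src e)) -> (forall e, tgt' e = h (tgt e)) ->
  (forall e, src e \in Vs /\ tgt e \in Vs) ->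
  tau0 kappa (TGraph V Vs E src tgt lab) = tau0 kappa (TGraph V' Vs' E src' tgt' lab).
Proof.
move=> h_inj h_Vs h_src h_tgt wf; rewrite /tau0.
rewrite (pb_iff (oriented_cactus_relabel lab h_inj h_Vs h_src h_tgt wf)).
rewrite (pads_relabel lab h_inj h_Vs h_src h_tgt wf).
case: pb => //; apply: eq_bigr => S _.
by rewrite (pad_order_relabel Vs' h_inj h_src h_tgt wf).
Qed.

Section MergingPartitions.
Variables (V W : finType) (D : {set V}) (F : V -> W).

Definition merges (Q : {set {set V}}) : bool :=
  [forall x in D, forall y in D, (F x == F y) ==> (pblock Q x == pblock Q y)].

Lemma mergesP Q :
  reflect {in D &, forall x y, F x = F y -> pblock Q x = pblock Q y} (merges Q).
Proof.
apply: (iffP forall_inP) => [H x y Hx Hy Exy|H x Hx].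
  by have /forall_inP /(_ y Hy) := H x Hx; rewrite Exy eqxx => /eqP.
by apply/forall_inP => y Hy; apply/implyP => /eqP /(H x y Hx Hy) ->.
Qed.

Definition image_partition (Q : {set {set V}}) : {set {set W}} :=
  [set F @: (B : {set V}) | B in Q].

Definition preimage_partition (P : {set {set W}}) : {set {set V}} :=
  [set [set x in D | F x \in (B : {set W})] | B in P].

Section Image.
Variable Q : {set {set V}}.
Hypotheses (Q_part : partition Q D) (Q_merges : merges Q).

Let covQ : cover Q = D. Proof. by case/and3P: Q_part => /eqP. Qed.
Let trQ : trivIset Q. Proof. by case/and3P: Q_part. Qed.

Let block_sub B x : B \in Q -> x \in B -> x \in D.
Proof. by move=> HB Hx; rewrite -covQ; apply/bigcupP; exists B. Qed.

Let Q_merge : {in D &, forall x y, F x = F y -> pblock Q x = pblock Q y}.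
Proof. exact/mergesP. Qed.

Lemma preimage_image_block B : B \in Q -> [set x in D | F x \in F @: B] = B.
Proof.
move=> HB; apply/setP => x; rewrite inE.
apply/andP/idP => [[Hx /imsetP [y Hy Exy]]|Hx]; last first.
  by split; [apply: block_sub HB Hx | apply: imset_f].
rewrite -(def_pblock trQ HB Hy) -(Q_merge Hx (block_sub HB Hy) Exy).
by rewrite mem_pblock covQ.
Qed.

Lemma image_partitionK : preimage_partition (image_partition Q) = Q.
Proof.
rewrite /preimage_partition /image_partition -imset_comp.
by rewrite (eq_in_imset (g := id)) ?imset_id // => B /preimage_image_block.
Qed.

Lemma image_block_inj : {in Q &, injective (fun B : {set V} => F @: B)}.
Proof.
by move=> B1 B2 H1 H2 E; rewrite -(preimage_image_block H1) -(preimage_image_block H2) E.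
Qed.

Lemma image_partition_partition : partition (image_partition Q) (F @: D).
Proof.
apply/and3P; split.
- apply/eqP/setP => w; apply/bigcupP/imsetP.
    by move=> [_ /imsetP [B HB ->] /imsetP [x Hx ->]]; exists x => //; apply: block_sub HB Hx.
  move=> [x Hx ->]; exists (F @: pblock Q x); last by rewrite imset_f // mem_pblock covQ.
  by rewrite imset_f // pblock_mem // covQ.
- apply/trivIsetP => _ _ /imsetP [B1 H1 ->] /imsetP [B2 H2 ->] Hne.
  apply/pred0P => w /=; apply/andP => -[/imsetP [x1 Hx1 ->] /imsetP [x2 Hx2 E]].
  move/negP: Hne; apply; rewrite -(def_pblock trQ H1 Hx1) -(def_pblock trQ H2 Hx2).
  by rewrite (Q_merge (block_sub H1 Hx1) (block_sub H2 Hx2) E).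
- apply/imsetP => -[B HB /esym /eqP]; rewrite imset_eq0 => /eqP B0.
  by case/and3P: Q_part => _ _; rewrite -B0 HB.
Qed.

Lemma pblock_image_partition v : v \in D ->
  pblock (image_partition Q) (F v) = F @: pblock Q v.
Proof.
move=> Hv; case/and3P: image_partition_partition => _ trP _.
apply: def_pblock => //; first by rewrite imset_f // pblock_mem // covQ.
by rewrite imset_f // mem_pblock covQ.
Qed.

End Image.

Section Preimage.
Variable P : {set {set W}}.
Hypothesis P_part : partition P (F @: D).

Let covP : cover P = F @: D. Proof. by case/and3P: P_part => /eqP. Qed.
Let trP : trivIset P. Proof. by case/and3P: P_part. Qed.

Let block_sub B w : B \in P -> w \in B -> w \in F @: D.
Proof. by move=> HB Hw; rewrite -covP; apply/bigcupP; exists B. Qed.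

Lemma preimage_partitionK : image_partition (preimage_partition P) = P.
Proof.
rewrite /preimage_partition /image_partition -imset_comp.
rewrite (eq_in_imset (g := id)) ?imset_id // => B HB /=.
apply/setP => w; apply/imsetP/idP => [[x]|Hw]; first by rewrite inE => /andP [_ Hx] ->.
by have /imsetP [x Hx Ew] := block_sub HB Hw; exists x; rewrite // inE Hx -Ew.
Qed.

Let trivIset_preimage : trivIset (preimage_partition P).
Proof.
apply/trivIsetP => _ _ /imsetP [B1 H1 ->] /imsetP [B2 H2 ->] Hne.
apply/pred0P => y /=; apply/andP; rewrite !inE => -[/andP [_ Hy1] /andP [_ Hy2]].
move/negP: Hne; apply; apply/eqP; congr [set y in D | F y \in _].
by rewrite -(def_pblock trP H1 Hy1) -(def_pblock trP H2 Hy2).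
Qed.

Let pblock_preimage x : x \in D ->
  pblock (preimage_partition P) x = [set y in D | F y \in pblock P (F x)].
Proof.
move=> Hx; have HF : F x \in cover P by rewrite covP imset_f.
apply: def_pblock => //; first by rewrite imset_f // pblock_mem.
by rewrite inE Hx mem_pblock.
Qed.

Lemma preimage_partition_partition : partition (preimage_partition P) D.
Proof.
apply/and3P; split => //.
- apply/eqP/setP => x; apply/bigcupP/idP => [[_ /imsetP [B HB ->]]|Hx].
    by rewrite inE => /andP [].
  have HF : F x \in cover P by rewrite covP imset_f.
  exists (pblock (preimage_partition P) x); rewrite pblock_preimage //.
    by rewrite imset_f // pblock_mem.
  by rewrite inE Hx mem_pblock.
- apply/imsetP => -[B HB E].
  have /set0Pn [w Hw] : B != set0 by apply: contraTneq HB => ->; case/and3P: P_part.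
  have /imsetP [x Hx Ew] := block_sub HB Hw.
  have : x \in [set y in D | F y \in B] by rewrite inE Hx -Ew.
  by rewrite -E inE.
Qed.

Lemma merges_preimage : merges (preimage_partition P).
Proof. by apply/mergesP => x y Hx Hy E; rewrite !pblock_preimage // E. Qed.

End Preimage.

End MergingPartitions.

Lemma tau_image (C : numClosedFieldType) (A : algType C) (kappa : seq A -> C)
  (G : tgraph A) (W : finType) (Ws : {set W}) (src' tgt' : tE G -> W)
  (F : tV G -> W) :
  tgraph_wf G -> Ws = F @: tVs G ->
  (forall e, src' e = F (tsrc e)) -> (forall e, tgt' e = F (ttgt e)) ->
  tau kappa (TGraph W Ws (tE G) src' tgt' (@tlab A G)) =
  \sum_(Q : {set {set tV G}} | partition Q (tVs G) && merges (tVs G) F Q)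
     tau0 kappa (tquot Q).
Proof.
move=> wf -> h_src h_tgt; rewrite /tau /=.
rewrite (reindex_onto (image_partition F) (preimage_partition (tVs G) F)) /=;
  last by move=> P /preimage_partitionK.
have cond Q : partition (image_partition F Q) (F @: tVs G) &&
    (preimage_partition (tVs G) F (image_partition F Q) == Q) =
    partition Q (tVs G) && merges (tVs G) F Q.
  apply/andP/andP => [[P_part /eqP <-]|[Q_part Q_merges]].
    by split; [apply: preimage_partition_partition | apply: merges_preimage].
  by split; [apply: image_partition_partition | rewrite image_partitionK].
apply: eq_big => // Q; rewrite cond => /andP [Q_part Q_merges].
have covQ : cover Q = tVs G by case/and3P: Q_part => /eqP.
symmetry; apply: tau0_relabel (image_block_inj Q_part Q_merges) _ _ _ _ => // e /=.
- by rewrite h_src (pblock_image_partition Q_part) //; case: (wf e).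
- by rewrite h_tgt (pblock_image_partition Q_part) //; case: (wf e).
- by case: (wf e) => Hs Ht; rewrite !pblock_mem // covQ.
Qed.

Lemma ident_eq (A : Type) (T : tgraph A) (x y u v : tV T) :
  ident x y u = ident x y v <-> u = v \/ (u \in [set x; y] /\ v \in [set x; y]).
Proof.
rewrite /ident; case: ifP => Hu; case: ifP => Hv.
- by split => // _; right.
- split => [E|[E|[_ Hv']]]; last by rewrite Hv' in Hv.
    have : x \in [set v] by rewrite -E !inE eqxx.
    by rewrite inE => /eqP Ex; rewrite -Ex !inE eqxx in Hv.
  by subst; rewrite Hu in Hv.
- split => [E|[E|[Hu' _]]]; last by rewrite Hu' in Hu.
    have : x \in [set u] by rewrite E !inE eqxx.
    by rewrite inE => /eqP Ex; rewrite -Ex !inE eqxx in Hu.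
  by subst; rewrite Hu in Hv.
- split => [/set1_inj ->|[->//|[Hu' _]]]; first by left.
  by rewrite Hu' in Hu.
Qed.

Lemma merges_ident (A : Type) (V : finType) (T : tgraph A) (D : {set V})
    (Q : {set {set V}}) (F : V -> {set tV T}) (k : V -> tV T) a b :
  a \in D -> b \in D -> (forall v, F v = ident (k a) (k b) (k v)) ->
  merges D F Q = merges D k Q && (pblock Q a == pblock Q b).
Proof.
move=> Ha Hb HF; apply/mergesP/andP => [H|[/mergesP Hk /eqP Hab]].
  split; first by apply/mergesP => x y Hx Hy E; apply: H => //; rewrite !HF E.
  apply/eqP; apply: H => //; rewrite !HF; apply/ident_eq; right.
  by rewrite !inE !eqxx ?orbT.
move=> x y Hx Hy; rewrite !HF => /ident_eq [E|[Hx' Hy']]; first exact: Hk.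
have to_a z : z \in D -> k z \in [set k a; k b] -> pblock Q z = pblock Q a.
  by move=> Hz; rewrite !inE => /orP [] /eqP E; [|rewrite Hab]; apply: Hk.
by rewrite (to_a x) // (to_a y).
Qed.

Lemma merges_id (V : finType) (D : {set V}) Q : merges D id Q.
Proof. by apply/mergesP => x y _ _ ->. Qed.

Lemma tdisj_wf (A : Type) (T1 T2 : tgraph A) :
  tgraph_wf T1 -> tgraph_wf T2 -> tgraph_wf (tdisj T1 T2).
Proof.
move=> wf1 wf2 [e|e] /=.
  by case: (wf1 e) => H1 H2; rewrite !inE !imset_f.
by case: (wf2 e) => H1 H2; rewrite !inE !imset_f ?orbT.
Qed.

Lemma tau0_not_cactus (C : numClosedFieldType) (A : algType C) (kappa : seq A -> C)
  (T : tgraph A) : ~ cactus T -> tau0 kappa T = 0.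
Proof. by move=> notT; rewrite /tau0; case: pbP => // -[]. Qed.

Section GmulDelta.
Variables (C : numClosedFieldType) (A : algType C) (kappa : seq A -> C).
Variables (t s : gmono A).
Hypotheses (t_wf : gm_wf t) (s_wf : gm_wf s).

Let G := tdisj (gT t) (gT s).
Let D := tVs G.
Let in_t : tV G := inl (gin t).
Let out_t : tV G := inl (gout t).
Let in_s : tV G := inr (gin s).
Let out_s : tV G := inr (gout s).

Let G_wf : tgraph_wf G.
Proof. by case: t_wf => wft _ _ _; case: s_wf => wfs _ _ _; apply: tdisj_wf. Qed.

Let roots_in : [/\ in_t \in D, out_t \in D, in_s \in D & out_s \in D].
Proof.
by case: t_wf => _ H1 H2 _; case: s_wf => _ H3 H4 _; rewrite /D /= !inE !imset_f ?orbT.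
Qed.

Lemma psi_gmul_sum : psi kappa (gmul t s) =
  \sum_(Q : {set {set tV G}} |
         [&& partition Q D, pblock Q in_t == pblock Q out_s
           & pblock Q in_s == pblock Q out_t])
     tau0 kappa (tquot Q).
Proof.
have [Hit Hot His Hos] := roots_in.
pose f := @ident A G in_t out_s.
pose F v := @ident A (gmap f) (f in_s) (f out_t) (f v).
rewrite /psi /Delta /gmul /= (@tau_image _ _ kappa G _ _ _ _ F) //; last by rewrite -imset_comp.
apply: eq_bigl => Q; congr (_ && _).
rewrite (@merges_ident _ _ _ D Q F f in_s out_t His Hot (fun _ => erefl)).
by rewrite (@merges_ident _ _ _ D Q f id in_t out_s Hit Hos (fun _ => erefl)) merges_id.
Qed.

Lemma psi_gmul_Delta_sum : psi kappa (gmul (Delta t) s) =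
  \sum_(Q : {set {set tV G}} |
         [&& partition Q D, pblock Q in_t == pblock Q out_t,
             pblock Q in_t == pblock Q out_s & pblock Q in_s == pblock Q in_t])
     tau0 kappa (tquot Q).
Proof.
have [Hit Hot His Hos] := roots_in.
pose g := @ident A (gT t) (gin t) (gout t).
pose G' := tdisj (gmap g) (gT s).
pose m (v : tV G) : tV G' := match v with inl x => inl (g x) | inr y => inr y end.
pose f := @ident A G' (m in_t) (m out_s).
pose F v := @ident A (gmap f) (f (m in_s)) (f (m in_t)) (f (m v)).
have mD : tVs G' = m @: D by rewrite /D /= imsetU -!imset_comp.
rewrite /psi /Delta /gmul /= (@tau_image _ _ kappa G _ _ _ _ F) //; first last.
- by case.
- by case.
- by rewrite -[tVs (gmap _)]/(f @: tVs G') mD -!imset_comp.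
have merges_m Q : merges D m Q = (pblock Q in_t == pblock Q out_t).
  apply/mergesP/eqP => [|E [x|x] [y|y] Hx Hy //= [Exy]]; last by rewrite Exy.
    by apply=> //; congr inl; apply/ident_eq; right; rewrite !inE !eqxx ?orbT.
  have [->//|[Hx' Hy']] := iffLR (ident_eq _ _ _ _) Exy.
  have to_in_t z : z \in [set gin t; gout t] -> pblock Q (inl z : tV G) = pblock Q in_t.
    by rewrite !inE => /orP [] /eqP ->.
  by rewrite (to_in_t x) // (to_in_t y).
apply: eq_bigl => Q; congr (_ && _).
rewrite (@merges_ident _ _ _ D Q F (fun v => f (m v)) in_s in_t His Hit (fun _ => erefl)).
by rewrite (@merges_ident _ _ _ D Q (fun v => f (m v)) m in_t out_s Hit Hos (fun _ => erefl))
  merges_m andbA.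
Qed.

Lemma tau0_quot_separated Q :
  pblock Q in_t = pblock Q out_s -> pblock Q in_s = pblock Q out_t ->
  pblock Q in_t != pblock Q out_t -> cycle_through (gin t) (gout t) ->
  tau0 kappa (tquot Q) = 0.
Proof.
move=> E_out_s E_in_s sep [sc [wc [cyc [Hin Hout]]]].
have [r1 [r2 [W1 W2 D12]]] := cycle_seq_walks cyc Hin Hout.
case: s_wf => _ Hins Houts s_conn.
have [r3 W3] := connect_walk (s_conn _ _ Hins Houts).
pose H := tquot Q.
have joins_l e u v : joins e u v ->
    joins (T := H) (inl e) (pblock Q (inl u : tV G)) (pblock Q (inl v : tV G)).
  by case/orP => /andP [/eqP <- /eqP <-]; rewrite /joins !eqxx ?orbT.
have joins_r e u v : joins e u v ->
    joins (T := H) (inr e) (pblock Q (inr u : tV G)) (pblock Q (inr v : tV G)).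
  by case/orP => /andP [/eqP <- /eqP <-]; rewrite /joins !eqxx ?orbT.
have W3' : walk (joins (T := H)) (pblock Q out_t)
             [seq (inr q.1, pblock Q (inr q.2 : tV G)) | q <- r3] (pblock Q in_t).
  by rewrite -E_in_s E_out_s; apply: walk_map joins_r W3.
pose lift_t (v : tV (gT t)) := pblock Q (inl v : tV G).
have W1' := walk_map (fe := inl) (fv := lift_t) joins_l W1.
have W2' := walk_map (fe := inl) (fv := lift_t) joins_l W2.
apply: tau0_not_cactus; apply: (three_disjoint_walks_not_cactus (T := H) sep W1' W2' W3').
- move=> f /mapP [_ /mapP [x1 H1 ->] ->] /mapP [_ /mapP [x2 H2 ->]] [E].
  by apply: (D12 x1.1); [apply: map_f | rewrite E; apply: map_f].
- by move=> f /mapP [_ /mapP [x1 _ ->] ->] /mapP [_ /mapP [x2 _ ->]].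
- by move=> f /mapP [_ /mapP [x1 _ ->] ->] /mapP [_ /mapP [x2 _ ->]].
Qed.

Lemma psi_gmul_Delta : gin t = gout t \/ cycle_through (gin t) (gout t) ->
  psi kappa (gmul t s) = psi kappa (gmul (Delta t) s).
Proof.
move=> t_Theta; rewrite psi_gmul_sum psi_gmul_Delta_sum.
rewrite (bigID (fun Q => pblock Q in_t == pblock Q out_t)) /= [X in _ + X]big1 ?addr0.
  apply: eq_bigl => Q; case: (pblock Q in_t =P pblock Q out_t) => [->|_]; last by rewrite !andbF.
  by rewrite andbT.
move=> Q /andP [/and3P [_ /eqP E_out_s /eqP E_in_s] sep].
case: t_Theta => [Eio|]; last exact: tau0_quot_separated.
by move: sep; rewrite /in_t /out_t Eio eqxx.
Qed.

End GmulDelta.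

Unset Implicit Arguments. Set Strict Implicit.

Theorem corollary2p10
  (C : numClosedFieldType) (A : algType C) (phi : A -> C) (kappa : seq A -> C)
  (phi_lin : forall (c : C) (a b : A), phi (c *: a + b) = c * phi a + phi b)
  (phi_unit : phi 1 = 1)
  (phi_trace : forall a b : A, phi (a * b) = phi (b * a))
  (kappa_free : forall s : seq A,
     phi (\prod_(a <- s) a) =
     \sum_(P : {set {set 'I_(size s)}} |
             partition P [set: 'I_(size s)] && noncrossing P)
        \prod_(B in P) kappa [seq nth 0 s (val i) | i <- enum B])
  (t : gmono A)
  (t_wf : gm_wf t)
  (t_Theta : gin t = gout t \/ cycle_through (gin t) (gout t))
  (u : seq (C * gmono A))
  (u_wf : forall x, List.In x u -> gm_wf x.2) :
  psiB kappa (mulB [:: (1, t); (-1, Delta t)] u) = 0.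
Proof.
rewrite /psiB /mulB /= cats0 big_cat !big_map /= -big_split /=.
elim: u u_wf => [|y u IH] u_wf; first by rewrite big_nil.
rewrite big_cons IH => [|x Hx]; last by apply: u_wf; right.
rewrite (psi_gmul_Delta kappa t_wf (u_wf y (or_introl erefl)) t_Theta).
by rewrite mul1r mulN1r mulNr addrN add0r.
Qed.
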